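(* For all real $\alpha,\beta$ with $\beta\neq0$, every integer $n\ge0$ and every real $x>0$, \[ P_n^{(\alpha,\beta)}(x^{\beta})=(-1)^n x^{n-\alpha}e^{-x^{\beta}}\Big(\frac{d}{dx}\Big)^n\big(x^{\alpha}e^{x^{\beta}}\big), \qquad P_n^{(\alpha,\beta)}(x^{-\beta})=x^{\alpha+1}e^{-x^{-\beta}}\Big(\frac{d}{dx}\Big)^n\big(x^{n-1-\alpha}e^{x^{-\beta}}\big). \]
   Context: For real $\alpha,\beta$ with $\beta\neq0$, the polynomials $P_n^{(\alpha,\beta)}(x)$, $n\ge0$, are defined by $\sum_{n\ge0}P_n^{(\alpha,\beta)}(x)\frac{t^n}{n!}=(1-t)^{\alpha}\exp\big(x((1-t)^{\beta}-1)\big)$ (formal power series in $t$). Real powers $x^{\gamma}$ of $x>0$ are the usual positive real powers. *)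

From Stdlib Require Import Reals Factorial.
Open Scope R_scope.

(** Formal power series in t with real coefficients: [nat -> R],
    the n-th entry being the coefficient of t^n. *)
Definition fps := nat -> R.

Definition fps_mul (a b : fps) : fps :=
  fun n => sum_f_R0 (fun k => a k * b (n - k)%nat) n.

Definition fps_one : fps := fun n => match n with O => 1 | _ => 0 end.

Fixpoint fps_pow (a : fps) (j : nat) : fps :=
  match j with O => fps_one | S j => fps_mul a (fps_pow a j) end.

Definition fps_scale (c : R) (a : fps) : fps := fun n => c * a n.

(** exp(h) for a formal series h with zero constant term:
    exp(h) = sum_j h^j / j!, and h^j has no t^n term for j > n,
    so the coefficient of t^n is the finite sum over j <= n. *)
Definition fps_exp (h : fps) : fps :=
  fun n => sum_f_R0 (fun j => fps_pow h j n / INR (fact j)) n.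

Fixpoint falling (a : R) (k : nat) : R :=
  match k with O => 1 | S k => falling a k * (a - INR k) end.

Definition gbinom (a : R) (k : nat) : R := falling a k / INR (fact k).

Definition fps_one_minus_t_pow (a : R) : fps :=
  fun k => (-1) ^ k * gbinom a k.

Definition fps_one_minus_t_pow_minus1 (b : R) : fps :=
  fun k => match k with O => 0 | _ => fps_one_minus_t_pow b k end.

Definition P (alpha beta : R) (n : nat) (x : R) : R :=
  INR (fact n) *
  fps_mul (fps_one_minus_t_pow alpha)
          (fps_exp (fps_scale x (fps_one_minus_t_pow_minus1 beta))) n.

Inductive nth_deriv_pos : nat -> (R -> R) -> (R -> R) -> Prop :=
| nth_deriv_pos_O : forall f, nth_deriv_pos O f f
| nth_deriv_pos_S : forall n f g h,
    nth_deriv_pos n f g ->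
    (forall x, 0 < x -> derivable_pt_lim g x (h x)) ->
    nth_deriv_pos (S n) f h.

From Stdlib Require Import Reals Factorial Lia Lra FunctionalExtensionality.
Open Scope R_scope.

(** Let [G(t) = (1-t)^a exp(z((1-t)^b - 1))], so that [P_n(z) = n! [t^n] G].
    The binomial series satisfies [(1-t) d/dt (1-t)^c = - c (1-t)^c], hence
    [(1-t) G' = - a G - b z (1-t)^b G]; since also [d/dz G = ((1-t)^b - 1) G],
    comparing coefficients gives [P_(n+1) = (n - a - b z) P_n - b z dP_n/dz].
    By this recurrence and the chain rule, the functions
    [F_k(x) = (-1)^k x^(a-k) e^(x^b) P_k(x^b)] satisfy [F_k' = F_(k+1)], and
    [F_0(x) = x^a e^(x^b)]: this is the first formula.  The second one is the
    first for the parameters [(n-1-a, -b)], through the reflection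
    [P_n^(a,b) = (-1)^n P_n^(n-1-a,-b)]: as [(1-t)^(a+1) = (1-t) (1-t)^a], both
    sides satisfy the same recurrence in [n]. *)

Lemma sum_f_R0_rev (f : nat -> R) n :
  sum_f_R0 f n = sum_f_R0 (fun k => f (n - k)%nat) n.
Proof.
  induction n as [|n IH]; [reflexivity|].
  rewrite (decomp_sum (fun k => f (S n - k)%nat)) by lia; simpl pred.
  rewrite tech5, IH, Nat.sub_0_r, Rplus_comm.
  f_equal; apply sum_eq; intros; f_equal.
Qed.

Lemma sum_f_R0_triangle (f : nat -> nat -> R) n :
  sum_f_R0 (fun m => sum_f_R0 (fun k => f k (m - k)%nat) m) n =
  sum_f_R0 (fun k => sum_f_R0 (fun j => f k j) (n - k)) n.
Proof.
  induction n as [|n IH]; [reflexivity|].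
  rewrite tech5, IH, (tech5 (fun k => sum_f_R0 _ (S n - k))), Nat.sub_diag.
  replace (sum_f_R0 (fun k => sum_f_R0 (fun j => f k j) (S n - k)) n) with
    (sum_f_R0 (fun k => sum_f_R0 (fun j => f k j) (n - k) + f k (S n - k)%nat) n).
  - rewrite sum_plus, (tech5 (fun k => f k (S n - k)%nat)), Nat.sub_diag; simpl; ring.
  - apply sum_eq; intros i Hi.
    replace (S n - i)%nat with (S (n - i)) by lia; rewrite tech5; reflexivity.
Qed.

Lemma sum_f_R0_swap (f : nat -> nat -> R) n m :
  sum_f_R0 (fun i => sum_f_R0 (fun j => f i j) m) n =
  sum_f_R0 (fun j => sum_f_R0 (fun i => f i j) n) m.
Proof.
  induction n as [|n IH]; [reflexivity|].
  rewrite tech5, IH, <- sum_plus; apply sum_eq; intros; rewrite tech5; reflexivity.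
Qed.

Definition fps_add (a b : fps) : fps := fun n => a n + b n.

(* [fps_shift a] is [t a] and [fps_1mt a] is [(1 - t) a]. *)
Definition fps_shift (a : fps) : fps := fun n => match n with O => 0 | S m => a m end.
Definition fps_1mt (a : fps) : fps := fun n => a n - fps_shift a n.

Definition fps_deriv (a : fps) : fps := fun n => INR (S n) * a (S n).

Lemma fps_mul_comm a b : fps_mul a b = fps_mul b a.
Proof.
  extensionality n; unfold fps_mul; rewrite sum_f_R0_rev.
  apply sum_eq; intros; replace (n - (n - i))%nat with i by lia; ring.
Qed.

Lemma fps_mul_assoc a b c : fps_mul a (fps_mul b c) = fps_mul (fps_mul a b) c.
Proof.
  extensionality n; unfold fps_mul.
  set (f k j := a k * b j * c (n - k - j)%nat).
  transitivity (sum_f_R0 (fun m => sum_f_R0 (fun k => f k (m - k)%nat) m) n).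
  - rewrite sum_f_R0_triangle; apply sum_eq; intros k Hk; unfold f.
    rewrite scal_sum; apply sum_eq; intros; ring.
  - apply sum_eq; intros m Hm; rewrite Rmult_comm, scal_sum; apply sum_eq; intros k Hk.
    unfold f; replace (n - k - (m - k))%nat with (n - m)%nat by lia; ring.
Qed.

Lemma fps_mul_add_distr_r a b c :
  fps_mul (fps_add a b) c = fps_add (fps_mul a c) (fps_mul b c).
Proof.
  extensionality n; unfold fps_mul, fps_add; rewrite <- sum_plus; apply sum_eq; intros; ring.
Qed.

Lemma fps_mul_add_distr_l a b c :
  fps_mul c (fps_add a b) = fps_add (fps_mul c a) (fps_mul c b).
Proof.
  extensionality n; unfold fps_mul, fps_add; rewrite <- sum_plus; apply sum_eq; intros; ring.
Qed.

Lemma fps_mul_scale_l s a b : fps_mul (fps_scale s a) b = fps_scale s (fps_mul a b).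
Proof.
  extensionality n; unfold fps_mul, fps_scale; rewrite scal_sum; apply sum_eq; intros; ring.
Qed.

Lemma fps_mul_scale_r s a b : fps_mul a (fps_scale s b) = fps_scale s (fps_mul a b).
Proof.
  extensionality n; unfold fps_mul, fps_scale; rewrite scal_sum; apply sum_eq; intros; ring.
Qed.

Lemma fps_mul_1_r a : fps_mul a fps_one = a.
Proof.
  extensionality n; unfold fps_mul; destruct n as [|n]; [simpl; ring|].
  rewrite tech5, sum_eq_R0, Nat.sub_diag; [simpl; ring|].
  intros i Hi; replace (S n - i)%nat with (S (n - i)) by lia; simpl; ring.
Qed.

Lemma fps_mul_1_l a : fps_mul fps_one a = a.
Proof. rewrite fps_mul_comm; apply fps_mul_1_r. Qed.

Lemma fps_mul_shift_l a b : fps_mul (fps_shift a) b = fps_shift (fps_mul a b).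
Proof.
  extensionality n; unfold fps_mul, fps_shift; destruct n as [|n]; [simpl; ring|].
  rewrite decomp_sum by lia; simpl pred; rewrite Rmult_0_l, Rplus_0_l; reflexivity.
Qed.

Lemma fps_mul_1mt_l a b : fps_mul (fps_1mt a) b = fps_1mt (fps_mul a b).
Proof.
  extensionality n; unfold fps_1mt; rewrite <- fps_mul_shift_l; unfold fps_mul.
  rewrite <- minus_sum; apply sum_eq; intros; ring.
Qed.

Lemma fps_mul_1mt_r a b : fps_mul a (fps_1mt b) = fps_1mt (fps_mul a b).
Proof. rewrite fps_mul_comm, fps_mul_1mt_l, fps_mul_comm; reflexivity. Qed.

Lemma fps_1mt_add a b : fps_1mt (fps_add a b) = fps_add (fps_1mt a) (fps_1mt b).
Proof. extensionality n; unfold fps_1mt, fps_add, fps_shift; destruct n; ring. Qed.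

Lemma fps_1mt_scale s a : fps_1mt (fps_scale s a) = fps_scale s (fps_1mt a).
Proof. extensionality n; unfold fps_1mt, fps_scale, fps_shift; destruct n; ring. Qed.

Lemma fps_1mt_deriv_coef a n :
  fps_1mt (fps_deriv a) n = INR (S n) * a (S n) - INR n * a n.
Proof. unfold fps_1mt, fps_shift, fps_deriv; destruct n; [simpl; ring | reflexivity]. Qed.

Lemma fps_deriv_scale s a : fps_deriv (fps_scale s a) = fps_scale s (fps_deriv a).
Proof. extensionality n; unfold fps_deriv, fps_scale; ring. Qed.

Lemma fps_deriv_mul a b :
  fps_deriv (fps_mul a b) = fps_add (fps_mul (fps_deriv a) b) (fps_mul a (fps_deriv b)).
Proof.
  extensionality n; unfold fps_deriv, fps_add, fps_mul.
  transitivity (sum_f_R0 (fun k => INR k * a k * b (S n - k)%nat) (S n) +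
                sum_f_R0 (fun k => a k * (INR (S n - k) * b (S n - k)%nat)) (S n)).
  { rewrite <- sum_plus, scal_sum; apply sum_eq; intros i Hi; rewrite minus_INR by lia; ring. }
  f_equal.
  - rewrite decomp_sum by lia; simpl pred; simpl INR at 1.
    rewrite Rmult_0_l, Rmult_0_l, Rplus_0_l; reflexivity.
  - rewrite tech5, Nat.sub_diag; simpl INR at 2; rewrite Rmult_0_l, Rmult_0_r, Rplus_0_r.
    apply sum_eq; intros i Hi; replace (S n - i)%nat with (S (n - i)) by lia; reflexivity.
Qed.

Lemma fps_deriv_pow h j :
  fps_deriv (fps_pow h (S j)) = fps_scale (INR (S j)) (fps_mul (fps_deriv h) (fps_pow h j)).
Proof.
  induction j as [|j IH].
  - extensionality n; simpl fps_pow; rewrite !fps_mul_1_r; unfold fps_scale; simpl; ring.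
  - change (fps_pow h (S (S j))) with (fps_mul h (fps_pow h (S j))).
    rewrite fps_deriv_mul, IH, fps_mul_scale_r, fps_mul_assoc,
      (fps_mul_comm h (fps_deriv h)), <- fps_mul_assoc.
    change (fps_mul h (fps_pow h j)) with (fps_pow h (S j)).
    extensionality n; unfold fps_add, fps_scale; rewrite (S_INR (S j)); ring.
Qed.

Lemma fps_pow_coef_lt h j m : h 0%nat = 0 -> (m < j)%nat -> fps_pow h j m = 0.
Proof.
  intros H0; revert m; induction j as [|j IH]; intros m Hm; [lia|].
  simpl; unfold fps_mul; apply sum_eq_R0; intros [|i] Hi.
  - rewrite H0; ring.
  - rewrite IH by lia; ring.
Qed.

Lemma fps_pow_scale s h j : fps_pow (fps_scale s h) j = fps_scale (s ^ j) (fps_pow h j).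
Proof.
  induction j as [|j IH].
  - extensionality n; unfold fps_scale; simpl; ring.
  - simpl fps_pow; rewrite IH, fps_mul_scale_l, fps_mul_scale_r.
    extensionality n; unfold fps_scale; simpl; ring.
Qed.

Lemma fps_exp_trunc h n N : h 0%nat = 0 -> (n <= N)%nat ->
  fps_exp h n = sum_f_R0 (fun j => fps_pow h j n / INR (fact j)) N.
Proof.
  intros H0 HN; unfold fps_exp; induction HN as [|N HN IH]; [reflexivity|].
  rewrite tech5, <- IH, (fps_pow_coef_lt h (S N) n H0) by lia; unfold Rdiv; ring.
Qed.

Lemma fps_mul_exp_coef a h n N : h 0%nat = 0 -> (n <= N)%nat ->
  fps_mul a (fps_exp h) n = sum_f_R0 (fun j => fps_mul a (fps_pow h j) n / INR (fact j)) N.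
Proof.
  intros H0 HN; unfold fps_mul at 1.
  transitivity (sum_f_R0 (fun k => sum_f_R0
    (fun j => a k * (fps_pow h j (n - k)%nat / INR (fact j))) N) n).
  - apply sum_eq; intros k Hk; rewrite (fps_exp_trunc h (n - k) N H0) by lia.
    rewrite scal_sum; apply sum_eq; intros; ring.
  - rewrite sum_f_R0_swap; apply sum_eq; intros j Hj; unfold fps_mul, Rdiv.
    rewrite Rmult_comm, scal_sum; apply sum_eq; intros; ring.
Qed.

Lemma fps_deriv_exp h : h 0%nat = 0 -> fps_deriv (fps_exp h) = fps_mul (fps_deriv h) (fps_exp h).
Proof.
  intros H0; extensionality n.
  rewrite (fps_mul_exp_coef _ h n n H0) by lia.
  unfold fps_deriv at 1, fps_exp; rewrite scal_sum, decomp_sum by lia; simpl pred.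
  change (fps_pow h 0 (S n)) with 0; rewrite Rdiv_0_l, Rmult_0_l, Rplus_0_l.
  apply sum_eq; intros j Hj.
  assert (Hpow : INR (S n) * fps_pow h (S j) (S n) =
                 INR (S j) * fps_mul (fps_deriv h) (fps_pow h j) n)
    by exact (f_equal (fun f => f n) (fps_deriv_pow h j)).
  rewrite fact_simpl, mult_INR.
  assert (INR (fact j) <> 0) by apply INR_fact_neq_0.
  assert (INR (S j) <> 0) by (apply not_0_INR; lia).
  transitivity (INR (S n) * fps_pow h (S j) (S n) / (INR (S j) * INR (fact j))).
  - unfold Rdiv; ring.
  - rewrite Hpow; field; auto.
Qed.

Lemma falling_add_1 a k :
  falling (a + 1) (S k) = falling a (S k) + INR (S k) * falling a k.
Proof.
  induction k as [|k IH]; [simpl; ring|].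
  change (falling (a + 1) (S (S k))) with (falling (a + 1) (S k) * (a + 1 - INR (S k))).
  rewrite IH; change (falling a (S (S k))) with (falling a (S k) * (a - INR (S k))).
  change (falling a (S k)) with (falling a k * (a - INR k)).
  rewrite !S_INR; ring.
Qed.

Lemma fps_one_minus_t_pow_add_1 a :
  fps_one_minus_t_pow (a + 1) = fps_1mt (fps_one_minus_t_pow a).
Proof.
  extensionality k; unfold fps_1mt, fps_shift, fps_one_minus_t_pow, gbinom.
  destruct k as [|k]; [simpl; ring|].
  rewrite falling_add_1, fact_simpl, mult_INR; simpl pow.
  assert (INR (fact k) <> 0) by apply INR_fact_neq_0.
  assert (INR (S k) <> 0) by (apply not_0_INR; lia).
  field; auto.
Qed.

Lemma fps_1mt_deriv_one_minus_t_pow a :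
  fps_1mt (fps_deriv (fps_one_minus_t_pow a)) = fps_scale (- a) (fps_one_minus_t_pow a).
Proof.
  assert (Hcoef : forall k, INR (S k) * fps_one_minus_t_pow a (S k) =
                            (INR k - a) * fps_one_minus_t_pow a k).
  { intros k; unfold fps_one_minus_t_pow, gbinom; rewrite fact_simpl, mult_INR.
    change (falling a (S k)) with (falling a k * (a - INR k)); simpl pow.
    assert (INR (fact k) <> 0) by apply INR_fact_neq_0.
    assert (INR (S k) <> 0) by (apply not_0_INR; lia).
    field; auto. }
  extensionality n; rewrite fps_1mt_deriv_coef, Hcoef; unfold fps_scale; ring.
Qed.

Lemma fps_one_minus_t_pow_minus1_add_1 b :
  fps_add (fps_one_minus_t_pow_minus1 b) fps_one = fps_one_minus_t_pow b.
Proof.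
  extensionality k; unfold fps_add, fps_one_minus_t_pow_minus1, fps_one.
  destruct k; [unfold fps_one_minus_t_pow, gbinom; simpl; field | ring].
Qed.

Lemma fps_scale_one_minus_t_pow_minus1_0 z b :
  fps_scale z (fps_one_minus_t_pow_minus1 b) 0%nat = 0.
Proof. unfold fps_scale; simpl; ring. Qed.

Definition P_gf_exp (b z : R) : fps := fps_exp (fps_scale z (fps_one_minus_t_pow_minus1 b)).

Definition P_gf (a b z : R) : fps := fps_mul (fps_one_minus_t_pow a) (P_gf_exp b z).

Definition P_deriv (a b : R) (n : nat) (z : R) : R :=
  INR (fact n) *
  fps_mul (fps_one_minus_t_pow a) (fps_mul (fps_one_minus_t_pow_minus1 b) (P_gf_exp b z)) n.

Lemma P_gf_coef a b n z : P a b n z = INR (fact n) * P_gf a b z n.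
Proof. reflexivity. Qed.

Lemma P_gf_ode a b z :
  fps_1mt (fps_deriv (P_gf a b z)) =
  fps_add (fps_scale (- a) (P_gf a b z))
    (fps_scale (- b * z)
      (fps_add (fps_mul (fps_one_minus_t_pow a)
                  (fps_mul (fps_one_minus_t_pow_minus1 b) (P_gf_exp b z)))
               (P_gf a b z))).
Proof.
  unfold P_gf; rewrite fps_deriv_mul, fps_1mt_add, <- fps_mul_1mt_l, <- fps_mul_1mt_r,
    fps_1mt_deriv_one_minus_t_pow.
  unfold P_gf_exp at 2; rewrite fps_deriv_exp by apply fps_scale_one_minus_t_pow_minus1_0.
  rewrite <- fps_mul_1mt_l, fps_deriv_scale, fps_1mt_scale.
  change (fps_deriv (fps_one_minus_t_pow_minus1 b))
    with (fps_deriv (fps_one_minus_t_pow b)).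
  rewrite fps_1mt_deriv_one_minus_t_pow; fold (P_gf_exp b z).
  rewrite !fps_mul_scale_l, <- (fps_one_minus_t_pow_minus1_add_1 b), fps_mul_add_distr_r,
    fps_mul_1_l, !fps_mul_scale_r, fps_mul_add_distr_l.
  extensionality n; unfold fps_add, fps_scale; ring.
Qed.

Lemma P_as_poly a b n z :
  P a b n z =
  sum_f_R0 (fun j => INR (fact n) * fps_mul (fps_one_minus_t_pow a)
                       (fps_pow (fps_one_minus_t_pow_minus1 b) j) n / INR (fact j) * z ^ j) (S n).
Proof.
  unfold P; rewrite (fps_mul_exp_coef _ _ n (S n)) by
    (apply fps_scale_one_minus_t_pow_minus1_0 || lia).
  rewrite scal_sum; apply sum_eq; intros j Hj.
  rewrite fps_pow_scale, fps_mul_scale_r; unfold fps_scale, Rdiv; ring.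
Qed.

Lemma derivable_pt_lim_P a b n z : derivable_pt_lim (P a b n) z (P_deriv a b n z).
Proof.
  set (c j := INR (fact n) * fps_mul (fps_one_minus_t_pow a)
                (fps_pow (fps_one_minus_t_pow_minus1 b) j) n / INR (fact j)).
  apply (derivable_pt_lim_ext (fun w => sum_f_R0 (fun j => c j * w ^ j) (S n))).
  { intros w; symmetry; apply P_as_poly. }
  replace (P_deriv a b n z) with (sum_f_R0 (fun k => INR (S k) * c (S k) * z ^ k) n);
    [exact (derivable_pt_lim_finite_sum c z (S n)) |].
  unfold P_deriv, P_gf_exp; rewrite fps_mul_assoc, (fps_mul_exp_coef _ _ n n)
    by (apply fps_scale_one_minus_t_pow_minus1_0 || lia).
  rewrite scal_sum; apply sum_eq; intros k Hk; unfold c.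
  rewrite fps_pow_scale, fps_mul_scale_r; unfold fps_scale; simpl fps_pow.
  rewrite fps_mul_assoc, fact_simpl, mult_INR.
  assert (INR (fact k) <> 0) by apply INR_fact_neq_0.
  assert (INR (S k) <> 0) by (apply not_0_INR; lia).
  field; auto.
Qed.

Lemma P_0 a b z : P a b 0 z = 1.
Proof. unfold P, fps_mul, fps_exp, fps_one_minus_t_pow, gbinom; simpl; field. Qed.

Lemma P_succ a b n z :
  P a b (S n) z = (INR n - a - b * z) * P a b n z - b * z * P_deriv a b n z.
Proof.
  assert (Hode := f_equal (fun f => f n) (P_gf_ode a b z)); cbv beta in Hode.
  rewrite fps_1mt_deriv_coef in Hode; unfold fps_add, fps_scale in Hode.
  rewrite !P_gf_coef; unfold P_deriv.
  set (Q := fps_mul (fps_one_minus_t_pow a)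
              (fps_mul (fps_one_minus_t_pow_minus1 b) (P_gf_exp b z)) n) in *.
  assert (Hnext : INR (S n) * P_gf a b z (S n) =
                  (INR n - a - b * z) * P_gf a b z n - b * z * Q) by lra.
  rewrite fact_simpl, mult_INR.
  transitivity (INR (fact n) * (INR (S n) * P_gf a b z (S n))); [ring|].
  rewrite Hnext; ring.
Qed.

Lemma P_succ_add_1 a b n z :
  P (a + 1) b (S n) z = - (a + 1 + b * z) * P a b n z - b * z * P_deriv a b n z.
Proof.
  assert (Hgf : P_gf (a + 1) b z = fps_1mt (P_gf a b z)).
  { unfold P_gf; rewrite fps_one_minus_t_pow_add_1, fps_mul_1mt_l; reflexivity. }
  transitivity (P a b (S n) z - INR (S n) * P a b n z).
  - rewrite !P_gf_coef, Hgf; unfold fps_1mt, fps_shift; rewrite fact_simpl, mult_INR; ring.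
  - rewrite P_succ, S_INR; ring.
Qed.

Lemma P_reflect a b n z : P a b n z = (-1) ^ n * P (INR n - 1 - a) (- b) n z.
Proof.
  revert z; induction n as [|n IH]; intros z; [rewrite !P_0; simpl; ring|].
  set (a' := INR n - 1 - a).
  assert (Hderiv : P_deriv a b n z = (-1) ^ n * P_deriv a' (- b) n z).
  { apply (uniqueness_limite (P a b n) z); [apply derivable_pt_lim_P|].
    apply (derivable_pt_lim_ext (fun w => (-1) ^ n * P a' (- b) n w)); [intros; symmetry; apply IH|].
    apply derivable_pt_lim_scal, derivable_pt_lim_P. }
  replace (INR (S n) - 1 - a) with (a' + 1) by (unfold a'; rewrite S_INR; ring).
  rewrite P_succ, P_succ_add_1, IH, Hderiv; unfold a'; simpl pow; ring.
Qed.

Definition rodrigues (a b : R) (k : nat) (x : R) : R :=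
  (-1) ^ k * Rpower x (a - INR k) * exp (Rpower x b) * P a b k (Rpower x b).

Lemma rodrigues_0 a b x : rodrigues a b 0 x = Rpower x a * exp (Rpower x b).
Proof. unfold rodrigues; rewrite P_0; simpl INR; rewrite Rminus_0_r; simpl; ring. Qed.

Lemma derivable_pt_lim_rodrigues a b k x :
  0 < x -> derivable_pt_lim (rodrigues a b k) x (rodrigues a b (S k) x).
Proof.
  intros Hx.
  assert (Hy := derivable_pt_lim_power x b Hx).
  assert (Hexp := derivable_pt_lim_comp _ exp x _ _ Hy (derivable_pt_lim_exp (Rpower x b))).
  assert (HP := derivable_pt_lim_comp _ (P a b k) x _ _ Hy (derivable_pt_lim_P a b k (Rpower x b))).
  assert (Hpow := derivable_pt_lim_scal _ ((-1) ^ k) x _ (derivable_pt_lim_power x (a - INR k) Hx)).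
  assert (Hd := derivable_pt_lim_mult _ _ x _ _ (derivable_pt_lim_mult _ _ x _ _ Hpow Hexp) HP).
  cbv beta delta [mult_fct mult_real_fct comp] in Hd.
  match type of Hd with derivable_pt_lim _ _ ?l =>
    replace (rodrigues a b (S k) x) with l; [exact Hd|] end.
  set (u := Rpower x (a - INR (S k))).
  assert (Eu : Rpower x (a - INR k) = u * x).
  { unfold u; rewrite <- (Rpower_1 x Hx) at 3; rewrite <- Rpower_plus, S_INR; f_equal; ring. }
  assert (Eu' : Rpower x (a - INR k - 1) = u) by (unfold u; rewrite S_INR; f_equal; ring).
  assert (Ey : Rpower x (b - 1) = Rpower x b / x).
  { replace b with ((b - 1) + 1) at 2 by ring; rewrite Rpower_plus, Rpower_1 by exact Hx.
    field; lra. }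
  unfold rodrigues; fold u; rewrite Eu, Eu', Ey, P_succ; simpl pow; field; lra.
Qed.

Section DerivativeChain.

Variable F : nat -> R -> R.
Hypothesis F_deriv : forall k x, 0 < x -> derivable_pt_lim (F k) x (F (S k) x).

Lemma nth_deriv_pos_chain_eq k f g :
  nth_deriv_pos k f g -> (forall x, 0 < x -> f x = F 0 x) -> forall x, 0 < x -> g x = F k x.
Proof.
  intros Hd; induction Hd as [f|n f g h Hd IH Hh]; intros Hf x Hx; [auto|].
  apply (uniqueness_limite g x); [now apply Hh|].
  apply (derivable_pt_lim_locally_ext (F n) g x 0 (x + 1)); [lra | | now apply F_deriv].
  intros y Hy; symmetry; apply IH; auto; lra.
Qed.

Lemma nth_deriv_pos_chain_exists k f :
  (forall x, 0 < x -> f x = F 0 x) -> exists g, nth_deriv_pos k f g.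
Proof.
  intros Hf; induction k as [|k [g Hg]]; [exists f; constructor|].
  exists (F (S k)); apply (nth_deriv_pos_S k f g (F (S k)) Hg); intros x Hx.
  apply (derivable_pt_lim_locally_ext (F k) g x 0 (x + 1)); [lra | | now apply F_deriv].
  intros y Hy; symmetry; apply (nth_deriv_pos_chain_eq k f g); auto; lra.
Qed.

End DerivativeChain.

Lemma rodrigues_formula a b n :
  let f := fun x => Rpower x a * exp (Rpower x b) in
  (exists g, nth_deriv_pos n f g) /\
  (forall g, nth_deriv_pos n f g -> forall x, 0 < x -> g x = rodrigues a b n x).
Proof.
  intros f.
  assert (Hf : forall x, 0 < x -> f x = rodrigues a b 0 x)
    by (intros; rewrite rodrigues_0; reflexivity).
  split.
  - exact (nth_deriv_pos_chain_exists _ (derivable_pt_lim_rodrigues a b) n f Hf).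
  - intros g Hg; exact (nth_deriv_pos_chain_eq _ (derivable_pt_lim_rodrigues a b) n f g Hg Hf).
Qed.

Lemma Rpower_mul_Ropp x c : Rpower x c * Rpower x (- c) = 1.
Proof. rewrite Rpower_Ropp; apply Rinv_r; unfold Rpower; apply Rgt_not_eq, exp_pos. Qed.

Theorem theorem1 :
  forall (alpha beta : R), beta <> 0 -> forall (n : nat),
    let f1 := fun x => Rpower x alpha * exp (Rpower x beta) in
    let f2 := fun x => Rpower x (INR n - 1 - alpha) * exp (Rpower x (- beta)) in
    ((exists g, nth_deriv_pos n f1 g) /\
     (forall g, nth_deriv_pos n f1 g -> forall x, 0 < x ->
        P alpha beta n (Rpower x beta) =
        (-1) ^ n * Rpower x (INR n - alpha) * exp (- Rpower x beta) * g x)) /\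
    ((exists g, nth_deriv_pos n f2 g) /\
     (forall g, nth_deriv_pos n f2 g -> forall x, 0 < x ->
        P alpha beta n (Rpower x (- beta)) =
        Rpower x (alpha + 1) * exp (- Rpower x (- beta)) * g x)).
Proof.
  intros a b _ n f1 f2.
  destruct (rodrigues_formula a b n) as [Hex1 Heq1].
  destruct (rodrigues_formula (INR n - 1 - a) (- b) n) as [Hex2 Heq2].
  assert (Hsign : (-1) ^ n * (-1) ^ n = 1)
    by (rewrite <- Rpow_mult_distr, <- (pow1 n); f_equal; ring).
  split; split; auto; intros g Hg x Hx.
  - rewrite (Heq1 g Hg x Hx); unfold rodrigues; rewrite exp_Ropp.
    replace (a - INR n) with (- (INR n - a)) by ring.
    transitivity ((-1) ^ n * (-1) ^ n * (Rpower x (INR n - a) * Rpower x (- (INR n - a))) *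
                  P a b n (Rpower x b)); [rewrite Hsign, Rpower_mul_Ropp; ring|].
    field; apply Rgt_not_eq, exp_pos.
  - rewrite (Heq2 g Hg x Hx), P_reflect; unfold rodrigues; rewrite exp_Ropp.
    replace (INR n - 1 - a - INR n) with (- (a + 1)) by ring.
    transitivity ((-1) ^ n * P (INR n - 1 - a) (- b) n (Rpower x (- b)) *
                  (Rpower x (a + 1) * Rpower x (- (a + 1)))); [rewrite Rpower_mul_Ropp; ring|].
    field; apply Rgt_not_eq, exp_pos.
Qed.
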